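(* Let $g\ge2$ be an integer and $\Gamma=\langle 2,2g+1\rangle$ (the numerical semigroup generated by $2$ and $2g+1$, of genus $g$). Let $G(m)=m+1-2g+E(\Gamma,2)$. Then: \begin{itemize} \item for $m=2g+2k+1$ with $k\ge0$, $\delta^2_\Gamma(m)=G(m)$; \item for $m=2g+2k$ with $0\le k\le g-2$, $\delta^2_\Gamma(m)=G(m)+1$; \item $\delta^2_\Gamma(4g-2)=2g+1=G(4g-2)$. \end{itemize}
   Context: For a numerical semigroup $\Gamma$ (subset of $\mathbb N$ containing $0$, closed under addition, finite complement) with conductor $c$ (least $c$ with $c+\mathbb N\subseteq\Gamma$) and genus $g=|\mathbb N\setminus\Gamma|$: $D_\Gamma(x)=\{s\in\Gamma:x-s\in\Gamma\}$, $\delta^2_\Gamma(m)=\min\{|D_\Gamma(m_1)\cup D_\Gamma(m_2)|: m\le m_1<m_2,\ m_i\in\Gamma\}$, and the second Feng-Rao number $E(\Gamma,2)$ is the integer with $\delta^2_\Gamma(m)=m+1-2g+E(\Gamma,2)$ for all $m\ge 2c-1$. *)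

From mathcomp Require Import all_boot all_order all_algebra.
Set Implicit Arguments. Unset Strict Implicit. Unset Printing Implicit Defensive.
Import GRing.Theory Num.Theory.

(* The semigroup <a, b> generated by a and b: x = i*a + j*b for some i, j in N
   (for a, b >= 1 the coefficients are automatically <= x). *)
Definition sg2 (a b : nat) : pred nat :=
  fun x => [exists i : 'I_x.+1, exists j : 'I_x.+1, i * a + j * b == x].

Definition is_conductor (G : pred nat) (c : nat) : Prop :=
  (forall n, c <= n -> G n) /\
  (forall c', (forall n, c' <= n -> G n) -> c <= c').

(* genus = number of gaps; all gaps are below the conductor c *)
Definition genus (G : pred nat) (c : nat) : nat := count (predC G) (iota 0 c).

Definition Dset (G : pred nat) (x : nat) : seq nat :=
  [seq s <- iota 0 x.+1 | G s && G (x - s)].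

Definition cardDU (G : pred nat) (m1 m2 : nat) : nat :=
  size (undup (Dset G m1 ++ Dset G m2)).

Definition is_delta2 (G : pred nat) (m : nat) (d : int) : Prop :=
  (exists m1 m2, [/\ m <= m1, m1 < m2, G m1, G m2 & d = Posz (cardDU G m1 m2)]) /\
  (forall m1 m2, m <= m1 -> m1 < m2 -> G m1 -> G m2 -> (d <= Posz (cardDU G m1 m2))%R).

(* E is the second Feng-Rao number E(Gamma,2):
   delta^2(m) = m + 1 - 2 g + E for all m >= 2c - 1. *)
Definition is_FengRao2 (G : pred nat) (E : int) : Prop :=
  exists c, is_conductor G c /\
    forall m, 2 * c - 1 <= m ->
      is_delta2 G m (Posz m + 1 - 2 * Posz (genus G c) + E)%R.

From mathcomp Require Import all_boot all_order all_algebra.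
From mathcomp Require Import zify.
Import Num.Theory.

Set Implicit Arguments.
Unset Strict Implicit.

(* Gamma = <2, 2g+1> consists of the even numbers and of all n >= 2g+1, so
   every D(x) is the union of two explicit arithmetic progressions of step 2
   (even s, and odd s with 2g+1 <= s <= x - 2g - 1, or the analogue for odd x),
   and |D(x)| = x - 2g + 1 for odd x.  For m1 < m2 in Gamma, D(m1) u D(m2)
   contains D(m1) plus m2 plus, when m1 is odd or m1 >= 4g, one further
   element of D(m2) \ D(m1); this gives |D(m1) u D(m2)| >= m1 + 3 - 2g in
   those cases and >= m1/2 + 2 for the remaining even m1.  Since 2 lies in
   Gamma, D(m1) is contained in D(m1 + 2), so the pair (m1, m1 + 2) attains
   these bounds; hence E(Gamma, 2) = 2, and for even m < 4g - 2 the best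
   choice is m1 = m + 1, which costs one more. *)

Lemma leq_size_undup_cat (T : eqType) (A B X : seq T) :
  uniq A -> uniq X -> {subset X <= B} -> {in X, forall x, x \notin A} ->
  size A + size X <= size (undup (A ++ B)).
Proof.
move=> uA uX XB XA; rewrite -size_cat; apply: uniq_leq_size.
- by rewrite cat_uniq uA uX andbT /=; apply/hasPn.
- move=> x; rewrite mem_cat mem_undup mem_cat => /orP[-> // | /XB ->].
  by rewrite orbT.
Qed.

Lemma size_undup_cat_subset (T : eqType) (A B : seq T) :
  uniq B -> {subset A <= B} -> size (undup (A ++ B)) = size B.
Proof.
move=> uB AB; apply/perm_size/uniq_perm; rewrite ?undup_uniq // => x.
by rewrite mem_undup mem_cat; case: (boolP (x \in A)) => // /AB ->.
Qed.

Lemma mem_sg2_2 b s : odd b -> sg2 2 b s = ~~ odd s || (b <= s).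
Proof.
move=> ob; apply/existsP/idP.
- case=> i /existsP[j /eqP <-].
  by case: (posnP j) => [-> | j_gt0]; apply/orP; [left | right]; nia.
- move=> hs; suff [i [j [le_i le_j def_s]]] :
      exists i j, [/\ i <= s, j <= s & i * 2 + j * b = s].
    exists (Ordinal (le_i : i < s.+1)); apply/existsP.
    by exists (Ordinal (le_j : j < s.+1)); apply/eqP.
  by case: (boolP (odd s)) hs => os hs; [exists (s - b)./2, 1 | exists s./2, 0]; split; lia.
Qed.

Definition aprog2 (a n : nat) : seq nat := [seq a + 2 * i | i <- iota 0 n].

Lemma mem_aprog2 a n s :
  (s \in aprog2 a n) = [&& a <= s, s < a + 2 * n & ~~ odd (s - a)].
Proof.
apply/mapP/idP => [[i] | hs]; first by rewrite mem_iota => hi ->; lia.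
by exists (s - a)./2; rewrite ?mem_iota; lia.
Qed.

Lemma size_aprog2 a n : size (aprog2 a n) = n.
Proof. by rewrite size_map size_iota. Qed.

Lemma uniq_aprog2_cat a b p q : odd (a + b) -> uniq (aprog2 a p ++ aprog2 b q).
Proof.
move=> oab; rewrite cat_uniq !map_inj_uniq ?iota_uniq ?andbT //; try by move=> i j; lia.
apply/hasPn => s; rewrite !(mem_aprog2 _ _ s); lia.
Qed.

Lemma size_eqi_aprog2_cat (L : seq nat) a b p q :
  odd (a + b) -> uniq L -> L =i aprog2 a p ++ aprog2 b q -> size L = p + q.
Proof.
move=> oab uL eqL.
by rewrite (perm_size (uniq_perm uL (uniq_aprog2_cat p q oab) eqL)) size_cat !size_aprog2.
Qed.

Section HyperellipticSemigroup.

Variable g : nat.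

Local Notation Gamma := (sg2 2 (2 * g + 1)).
Local Notation D := (Dset Gamma).

Lemma mem_Gamma s : Gamma s = ~~ odd s || (2 * g + 1 <= s).
Proof. by apply: mem_sg2_2; lia. Qed.

Lemma mem_D x s :
  (s \in D x) = [&& s <= x, ~~ odd s || (2 * g + 1 <= s)
                          & ~~ odd (x - s) || (2 * g + 1 <= x - s)].
Proof. by rewrite mem_filter mem_iota !mem_Gamma add0n ltnS andbC. Qed.

Lemma conductor_Gamma : is_conductor Gamma (2 * g).
Proof.
split=> [n le_n | c Gc]; first by rewrite mem_Gamma; lia.
case: (leqP (2 * g) c) => // lt_c.
by have := Gc (2 * g - 1); rewrite mem_Gamma; lia.
Qed.

Lemma genus_Gamma : genus Gamma (2 * g) = g.
Proof.
rewrite /genus -size_filter; apply: (@size_eqi_aprog2_cat _ 0 1 0 g) => //.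
  exact: filter_uniq (iota_uniq _ _).
by move=> s; rewrite mem_filter mem_iota mem_cat !mem_aprog2 /= mem_Gamma; lia.
Qed.

Lemma Gamma_add2 n : Gamma n -> Gamma (n + 2).
Proof. by rewrite !mem_Gamma; lia. Qed.

Lemma D_sub_D_add2 x : {subset D x <= D (x + 2)}.
Proof.
move=> s; rewrite !mem_filter !mem_iota /= => /andP[/andP[Gs Gxs] lt_s].
by rewrite Gs -addnBAC ?Gamma_add2 //; lia.
Qed.

Lemma uniq_D x : uniq (D x).
Proof. exact: filter_uniq (iota_uniq _ _). Qed.

Lemma size_D_even x : ~~ odd x -> size (D x) = x./2 + 1 + (x./2 - 2 * g).
Proof.
move=> ex; apply: (@size_eqi_aprog2_cat _ 0 (2 * g + 1)) (uniq_D x) _; first by lia.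
by move=> s; rewrite mem_D mem_cat !mem_aprog2; lia.
Qed.

Lemma size_D_odd x : odd x -> 2 * g + 1 <= x -> size (D x) = x - 2 * g + 1.
Proof.
move=> ox le_x; have -> : x - 2 * g + 1 = x./2 - g + 1 + (x./2 - g + 1) by lia.
apply: (@size_eqi_aprog2_cat _ 0 (2 * g + 1)) (uniq_D x) _; first by lia.
by move=> s; rewrite mem_D mem_cat !mem_aprog2; lia.
Qed.

Lemma cardDU_add2 m :
  (odd m && (2 * g + 1 <= m)) || (~~ odd m && (4 * g - 2 <= m)) ->
  cardDU Gamma m (m + 2) = m + 3 - 2 * g.
Proof.
rewrite /cardDU (size_undup_cat_subset (uniq_D _) (D_sub_D_add2 (x := m))).
by case/orP=> /andP[pm le_m]; [rewrite size_D_odd | rewrite size_D_even]; lia.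
Qed.

Lemma cardDU_ge_witnesses m1 m2 (X : seq nat) : uniq X ->
  (forall x, x \in X -> (x \in D m2) && (x \notin D m1)) ->
  size (D m1) + size X <= cardDU Gamma m1 m2.
Proof.
move=> uX hX; apply: leq_size_undup_cat (uniq_D m1) uX _ _.
- by move=> x /hX /andP[].
- by move=> x /hX /andP[].
Qed.

Hypothesis g_gt0 : 0 < g.

Definition delta2_bound m := if ~~ odd m && (m < 4 * g) then m./2 + 2 else m + 3 - 2 * g.

Lemma cardDU_ge_bound m1 m2 : m1 < m2 -> Gamma m1 -> Gamma m2 ->
  delta2_bound m1 <= cardDU Gamma m1 m2.
Proof.
rewrite /delta2_bound !mem_Gamma => lt_m12 G1 G2.
have m2_new : (m2 \in D m2) && (m2 \notin D m1) by rewrite !mem_D; lia.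
have witness1 : size (D m1) + 1 <= cardDU Gamma m1 m2.
  by apply: (@cardDU_ge_witnesses m1 m2 [:: m2]) => // x; rewrite inE => /eqP ->.
have witness2 b : b != m2 -> b \in D m2 -> b \notin D m1 ->
    size (D m1) + 2 <= cardDU Gamma m1 m2.
  move=> b_m2 b2 b1; apply: (@cardDU_ge_witnesses m1 m2 [:: b; m2]).
    by rewrite /= inE b_m2.
  by move=> x; rewrite !inE => /orP[] /eqP -> //; rewrite b2 b1.
have [om1 | em1] := boolP (odd m1) => /=.
- suff : size (D m1) + 2 <= cardDU Gamma m1 m2 by rewrite size_D_odd //; lia.
  have [om2 | em2] := boolP (odd m2).
  + by apply: (witness2 (m2 - 2 * g - 1)); rewrite ?mem_D; lia.
  + by apply: (witness2 (m1 - 2 * g + 1)); rewrite ?mem_D; lia.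
- have [m1_small | m1_large] := ltnP m1 (4 * g) => /=.
  + by move: witness1; rewrite size_D_even //; lia.
  + suff : size (D m1) + 2 <= cardDU Gamma m1 m2 by rewrite size_D_even //; lia.
    have [om2 | em2] := boolP (odd m2).
    * by apply: (witness2 (m2 - 2)); rewrite ?mem_D; lia.
    * by apply: (witness2 (m2 - 2 * g - 1)); rewrite ?mem_D; lia.
Qed.

Lemma is_delta2_Gamma m m1 d : m <= m1 ->
  (odd m1 && (2 * g + 1 <= m1)) || (~~ odd m1 && (4 * g - 2 <= m1)) ->
  m1 + 3 - 2 * g = d ->
  (forall n, m <= n -> Gamma n -> d <= delta2_bound n) ->
  is_delta2 Gamma m d.
Proof.
move=> le_m hm1 <- bound_ge; split.
- exists m1, (m1 + 2); split; rewrite ?mem_Gamma ?cardDU_add2 //; lia.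
- move=> n1 n2 le_n1 lt_n12 G1 G2; rewrite lez_nat.
  exact: leq_trans (bound_ge _ le_n1 G1) (cardDU_ge_bound lt_n12 G1 G2).
Qed.

Lemma delta2_odd m : odd m -> 2 * g + 1 <= m -> is_delta2 Gamma m (m + 3 - 2 * g)%N.
Proof.
move=> om le_m; apply: (is_delta2_Gamma (m1 := m)) => //; first by rewrite om le_m.
by move=> n le_n; rewrite mem_Gamma /delta2_bound; case: ifP; lia.
Qed.

Lemma delta2_even_small m : ~~ odd m -> 2 * g <= m -> m <= 4 * g - 4 ->
  is_delta2 Gamma m (m + 4 - 2 * g)%N.
Proof.
move=> em le_m m_le; apply: (is_delta2_Gamma (m1 := m + 1)); try lia.
by move=> n le_n; rewrite mem_Gamma /delta2_bound; case: ifP; lia.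
Qed.

Lemma delta2_large m : 4 * g - 2 <= m -> is_delta2 Gamma m (m + 3 - 2 * g)%N.
Proof.
move=> le_m; apply: (is_delta2_Gamma (m1 := m)); try lia.
by move=> n le_n; rewrite mem_Gamma /delta2_bound; case: ifP; lia.
Qed.

End HyperellipticSemigroup.

Theorem theorem5p3 (g : nat) (hg : 2 <= g) :
  exists E : int,
    is_FengRao2 (sg2 2 (2 * g + 1)) E /\
    (forall k : nat,
       is_delta2 (sg2 2 (2 * g + 1)) (2 * g + 2 * k + 1)
         (Posz (2 * g + 2 * k + 1) + 1 - 2 * Posz g + E)%R) /\
    (forall k : nat, k <= g - 2 ->
       is_delta2 (sg2 2 (2 * g + 1)) (2 * g + 2 * k)
         (Posz (2 * g + 2 * k) + 1 - 2 * Posz g + E + 1)%R) /\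
    is_delta2 (sg2 2 (2 * g + 1)) (4 * g - 2) (Posz (2 * g + 1)) /\
    Posz (2 * g + 1) = (Posz (4 * g - 2) + 1 - 2 * Posz g + E)%R.
Proof.
exists 2%R; split; [|split; [|split; [|split]]].
- exists (2 * g); split; first exact: conductor_Gamma.
  move=> m le_m; rewrite genus_Gamma.
  have -> : (Posz m + 1 - 2 * Posz g + 2)%R = Posz (m + 3 - 2 * g) by lia.
  by apply: delta2_large; lia.
- move=> k; set m := 2 * g + 2 * k + 1.
  have -> : (Posz m + 1 - 2 * Posz g + 2)%R = Posz (m + 3 - 2 * g) by lia.
  by apply: delta2_odd; lia.
- move=> k le_k; set m := 2 * g + 2 * k.
  have -> : (Posz m + 1 - 2 * Posz g + 2 + 1)%R = Posz (m + 4 - 2 * g) by lia.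
  by apply: delta2_even_small; lia.
- have -> : Posz (2 * g + 1) = Posz (4 * g - 2 + 3 - 2 * g) by congr Posz; lia.
  by apply: delta2_large; lia.
- lia.
Qed.
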